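(* There is an absolute constant $C>0$ such that the following holds. Let $I \subseteq [0,1]$ be an open interval of length $|I|$. Let $\chi$ be a primitive Dirichlet character modulo a prime $q$ of order $d$. Then for any $K \geq 1$, $$\Big|\,|\{1\le n < q : \{\arg(\chi(n))\} \in I\}| - q|I|\,\Big| \le C q\left(\frac{1}{K} + \frac{\log(1+\lfloor K/d\rfloor)}{d}\right),$$ where $\{t\}$ denotes the fractional part of $t$.
   Context: For $z$ on the unit circle, $\arg(z)$ is the unique element of $(-1/2,1/2]$ with $z=e^{2\pi i \arg(z)}$. *)

From Stdlib Require Import Reals ZArith Znumtheory List Lra ClassicalEpsilon.
From Coquelicot Require Import Coquelicot.
Open Scope R_scope.

Definition is_dirichlet_char (q : Z) (chi : Z -> C) : Prop :=
  (forall m n : Z, chi (m * n)%Z = Cmult (chi m) (chi n)) /\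
  (forall n : Z, chi (n + q)%Z = chi n) /\
  chi 1%Z = RtoC 1 /\
  (forall n : Z, chi n = RtoC 0 <-> Z.gcd n q <> 1%Z).

Definition is_primitive_char (q : Z) (chi : Z -> C) : Prop :=
  is_dirichlet_char q chi /\
  ~ (exists m : Z, (1 <= m < q)%Z /\ (m | q)%Z /\
       forall a b : Z, Z.gcd a q = 1%Z -> Z.gcd b q = 1%Z ->
         (a mod m = b mod m)%Z -> chi a = chi b).

Definition char_order (q : Z) (chi : Z -> C) (d : nat) : Prop :=
  (0 < d)%nat /\
  (forall n : Z, Z.gcd n q = 1%Z -> Cpow (chi n) d = RtoC 1) /\
  (forall e : nat, (0 < e < d)%nat ->
     ~ (forall n : Z, Z.gcd n q = 1%Z -> Cpow (chi n) e = RtoC 1)).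

Definition expi2pi (t : R) : C := (cos (2 * PI * t), sin (2 * PI * t)).

(* For z on the unit circle, arg z is the unique t in (-1/2, 1/2] with
   z = e^{2 pi i t} (chosen by Hilbert's epsilon; unique on the unit circle). *)
Definition arg (z : C) : R :=
  epsilon (inhabits 0) (fun t => -1/2 < t <= 1/2 /\ z = expi2pi t).

Definition frac (t : R) : R := frac_part t.

Definition count_arg_in (q : Z) (chi : Z -> C) (a b : R) : nat :=
  length (filter
    (fun n : Z =>
       if Rlt_dec a (frac (arg (chi n))) then
         if Rlt_dec (frac (arg (chi n))) b then true else false
       else false)
    (map Z.of_nat (seq 1 (Z.to_nat q - 1)))).

From Stdlib Require Import Reals ZArith Znumtheory List Lra Lia Permutation ClassicalEpsilon.
From Coquelicot Require Import Coquelicot.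
Open Scope R_scope.

(* The values of chi on (Z/qZ)^* form a finite subgroup of C^*, of order m say, so they
   are m-th roots of unity (Lagrange), and m >= d since chi^m is principal. As chi is a
   homomorphism, every value is taken (q-1)/m times, and the m distinct m-th roots of unity
   z are matched with the grid points j/m by {arg z} = j/m. Hence the count is (q-1)/m times
   the number of j < m with j/m in I, which is within 1 of m|I|; the error is thus at most
   2q/m <= 2q/d, while the bracket on the right is at least 1/(2d) (it exceeds 1/d when
   K < d, and ln 2 / d otherwise). *)

Lemma Permutation_filter_length {A} (f : A -> bool) (l l' : list A) :
  Permutation l l' -> length (filter f l) = length (filter f l').
Proof.
  induction 1; simpl; auto.
  - destruct (f x); simpl; auto.
  - destruct (f x), (f y); simpl; auto.
  - congruence.
Qed.

Lemma length_filter_split {A} (g h : A -> bool) (l : list A) :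
  length (filter g l)
  = (length (filter g (filter h l))
     + length (filter g (filter (fun x => negb (h x)) l)))%nat.
Proof.
  induction l as [|x l IH]; simpl; auto.
  destruct (h x); simpl; destruct (g x); simpl; lia.
Qed.

Definition fiber {A B} (eq_dec : forall x y : B, {x = y} + {x <> y})
  (f : A -> B) (l : list A) (z : B) : list A :=
  filter (fun x => if eq_dec (f x) z then true else false) l.

Lemma length_filter_uniform_fibers {A B} (eq_dec : forall x y : B, {x = y} + {x <> y})
  (f : A -> B) (P : B -> bool) (k : nat) (L : list B) (l : list A) :
  NoDup L -> (forall x, In x l -> In (f x) L) ->
  (forall z, In z L -> length (fiber eq_dec f l z) = k) ->
  length (filter (fun x => P (f x)) l) = (k * length (filter P L))%nat.
Proof.
  revert l. induction L as [|z L IH]; intros l HL Hl Hk.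
  - destruct l as [|x l]; [simpl; lia|]. destruct (Hl x (or_introl eq_refl)).
  - apply NoDup_cons_iff in HL as [Hz HL].
    set (h := fun x => if eq_dec (f x) z then true else false).
    set (l' := filter (fun x => negb (h x)) l).
    assert (Hout : forall x, In x l' -> f x <> z).
    { intros x Hx E. apply filter_In in Hx as [_ Hx]. unfold h in Hx.
      destruct (eq_dec (f x) z); easy. }
    assert (Hin : forall x, In x (filter h l) -> f x = z).
    { intros x Hx. apply filter_In in Hx as [_ Hx]. unfold h in Hx.
      destruct (eq_dec (f x) z); easy. }
    assert (Hz_part : length (filter (fun x => P (f x)) (filter h l))
                      = if P z then k else 0%nat).
    { erewrite (filter_ext_in _ (fun _ => P z)) by (intros x Hx; now rewrite Hin).
      rewrite <- (Hk z (or_introl eq_refl)).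
      destruct (P z); [now rewrite List.filter_true | now rewrite List.filter_false]. }
    assert (Hrest : length (filter (fun x => P (f x)) l') = (k * length (filter P L))%nat).
    { apply IH; auto.
      - intros x Hx. destruct (Hl x) as [E|E]; auto.
        + apply filter_In in Hx; tauto.
        + now destruct (Hout x Hx).
      - intros z' Hz'. rewrite <- (Hk z' (or_intror Hz')).
        unfold fiber. rewrite (length_filter_split _ h l).
        erewrite (filter_ext_in _ (fun _ => false) (filter h l)), List.filter_false; [reflexivity|].
        intros x Hx. rewrite Hin by auto.
        destruct (eq_dec z z'); [subst; contradiction | reflexivity]. }
    rewrite (length_filter_split _ h); fold l'. rewrite Hz_part, Hrest. simpl.
    destruct (P z); simpl; lia.
Qed.

Definition in_open_interval (a b x : R) : bool :=
  if Rlt_dec a x then if Rlt_dec x b then true else false else false.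

Definition count_lt (m : nat) (y : R) : nat :=
  length (filter (fun j => if Rlt_dec (INR j) y then true else false) (seq 0 m)).

Definition count_le (m : nat) (x : R) : nat :=
  length (filter (fun j => if Rle_dec (INR j) x then true else false) (seq 0 m)).

Lemma count_lt_bound (m : nat) (y : R) : 0 <= y ->
  (y <= INR m -> y <= INR (count_lt m y) < y + 1) /\ (INR m <= y -> count_lt m y = m).
Proof.
  intros Hy. induction m as [|m [IH1 IH2]].
  - split; [simpl; lra | reflexivity].
  - unfold count_lt in *. rewrite seq_S, filter_app, length_app, S_INR. simpl.
    destruct (Rlt_dec (INR m) y); simpl.
    + rewrite IH2, plus_INR by lra. simpl. split; intros; [lra | lia].
    + rewrite Nat.add_0_r. split; intros; [apply IH1 | exfalso]; lra.
Qed.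

Lemma count_le_bound (m : nat) (x : R) : 0 <= x ->
  (x <= INR m -> x <= INR (count_le m x) <= x + 1) /\ (INR m <= x -> count_le m x = m).
Proof.
  intros Hx. induction m as [|m [IH1 IH2]].
  - split; [simpl; lra | reflexivity].
  - unfold count_le in *. rewrite seq_S, filter_app, length_app, S_INR. simpl.
    destruct (Rle_dec (INR m) x); simpl.
    + rewrite IH2, plus_INR by lra. simpl. split; intros; [lra | lia].
    + rewrite Nat.add_0_r. split; intros; [apply IH1 | exfalso]; lra.
Qed.

Lemma count_open_interval (m : nat) (x y : R) : x < y ->
  (length (filter (fun j => in_open_interval x y (INR j)) (seq 0 m)) + count_le m x
   = count_lt m y)%nat.
Proof.
  intros Hxy. unfold count_le, count_lt.
  induction (seq 0 m) as [|j l IH]; simpl; auto.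
  unfold in_open_interval at 1.
  destruct (Rlt_dec x (INR j)), (Rlt_dec (INR j) y), (Rle_dec (INR j) x);
    simpl; lra || lia.
Qed.

Lemma in_open_interval_div (a b x c : R) : 0 < c ->
  in_open_interval a b (x / c) = in_open_interval (c * a) (c * b) x.
Proof.
  intros Hc. replace x with (c * (x / c)) at 2 by (field; lra).
  set (y := x / c). unfold in_open_interval.
  destruct (Rlt_dec a y), (Rlt_dec (c * a) (c * y)), (Rlt_dec y b), (Rlt_dec (c * y) (c * b));
    reflexivity || nra.
Qed.

Lemma count_grid_points (m : nat) (a b : R) : (0 < m)%nat -> 0 <= a -> a < b -> b <= 1 ->
  Rabs (INR (length (filter (fun j => in_open_interval a b (INR j / INR m)) (seq 0 m)))
        - INR m * (b - a)) <= 1.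
Proof.
  intros Hm Ha Hab Hb.
  assert (Hm' : 0 < INR m) by (apply lt_0_INR; lia).
  erewrite filter_ext by (intro j; apply (in_open_interval_div _ _ _ _ Hm')).
  pose proof (count_open_interval m (INR m * a) (INR m * b) ltac:(nra)) as Hsplit.
  apply (f_equal INR) in Hsplit. rewrite plus_INR in Hsplit.
  destruct (count_lt_bound m (INR m * b) ltac:(nra)) as [Hlt _].
  destruct (count_le_bound m (INR m * a) ltac:(nra)) as [Hle _].
  specialize (Hlt ltac:(nra)). specialize (Hle ltac:(nra)).
  apply Rabs_le. split; nra.
Qed.

Lemma expi2pi_pow (t : R) (n : nat) : Cpow (expi2pi t) n = expi2pi (INR n * t).
Proof.
  induction n as [|n IH].
  - unfold expi2pi. simpl. rewrite !Rmult_0_l, Rmult_0_r, cos_0, sin_0. reflexivity.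
  - rewrite Cpow_S, IH. unfold expi2pi, Cmult. simpl fst; simpl snd. rewrite S_INR.
    replace (2 * PI * ((INR n + 1) * t)) with (2 * PI * t + 2 * PI * (INR n * t)) by ring.
    rewrite cos_plus, sin_plus. f_equal; ring.
Qed.

Lemma cos_eq_1_inv (x : R) : cos x = 1 -> exists k : Z, x = 2 * IZR k * PI.
Proof.
  intros H. replace x with (2 * (x / 2)) in H by field.
  rewrite cos_2a_sin in H.
  destruct (sin_eq_0_0 (x / 2)) as [k Hk]; [nra|].
  exists k. lra.
Qed.

Lemma Cmod_1_expi2pi (z : C) : Cmod z = 1 ->
  exists t, -1/2 < t <= 1/2 /\ z = expi2pi t.
Proof.
  destruct z as [x y]. unfold Cmod. simpl fst; simpl snd. intros H.
  assert (Hs : x ^ 2 + y ^ 2 = 1).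
  { rewrite <- (sqrt_sqrt (x ^ 2 + y ^ 2)) by nra. rewrite H. ring. }
  assert (Hx : -1 <= x <= 1) by nra.
  pose proof PI_RGT_0.
  pose proof (acos_bound x).
  pose proof (cos_acos x Hx) as Hc.
  pose proof (sin_acos x Hx) as Hsn.
  replace (1 - x²) with y² in Hsn by (unfold Rsqr; nra).
  rewrite sqrt_Rsqr_abs in Hsn.
  assert (0 <= acos x / (2 * PI)) by (apply Rdiv_le_0_compat; lra).
  assert (acos x / (2 * PI) <= 1 / 2)
    by (apply Rmult_le_reg_r with (2 * PI); [lra | field_simplify; lra]).
  destruct (Rle_dec 0 y) as [hy | hy].
  - exists (acos x / (2 * PI)). split; [lra|].
    unfold expi2pi. replace (2 * PI * (acos x / (2 * PI))) with (acos x) by (field; lra).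
    rewrite Hc, Hsn, Rabs_right by lra. reflexivity.
  - exists (- (acos x / (2 * PI))). split.
    + assert (acos x <> PI).
      { intro E. rewrite E, sin_PI in Hsn. pose proof (Rabs_pos_lt y). lra. }
      assert (acos x / (2 * PI) < 1 / 2)
        by (apply Rmult_lt_reg_r with (2 * PI); [lra | field_simplify; lra]).
      lra.
    + unfold expi2pi. replace (2 * PI * - (acos x / (2 * PI))) with (- acos x) by (field; lra).
      rewrite cos_neg, sin_neg, Hc, Hsn, Rabs_left by lra. f_equal; ring.
Qed.

Lemma arg_spec (z : C) : Cmod z = 1 -> -1/2 < arg z <= 1/2 /\ z = expi2pi (arg z).
Proof. intros H. unfold arg. apply epsilon_spec, Cmod_1_expi2pi, H. Qed.

Lemma Cmod_root_of_unity (z : C) (m : nat) : (0 < m)%nat -> Cpow z m = 1 -> Cmod z = 1.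
Proof.
  intros Hm H. assert (E := Cmod_pow z m). rewrite H, Cmod_1 in E.
  pose proof (Cmod_ge_0 z).
  destruct (Rtotal_order (Cmod z) 1) as [h | [h | h]]; auto.
  - pose proof (pow_lt_1_compat (Cmod z) m ltac:(lra) Hm). lra.
  - pose proof (Rlt_pow_R1 (Cmod z) m h Hm). lra.
Qed.

Lemma frac_arg_inj (z1 z2 : C) : Cmod z1 = 1 -> Cmod z2 = 1 ->
  frac (arg z1) = frac (arg z2) -> z1 = z2.
Proof.
  intros H1 H2 E. unfold frac, frac_part in E.
  destruct (arg_spec z1 H1) as [A1 B1], (arg_spec z2 H2) as [A2 B2].
  set (n := (Int_part (arg z2) - Int_part (arg z1))%Z).
  assert (D : arg z2 - arg z1 = IZR n) by (unfold n; rewrite minus_IZR; lra).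
  assert (n = 0%Z).
  { assert (-1 < n)%Z by (apply lt_IZR; lra).
    assert (n < 1)%Z by (apply lt_IZR; lra).
    lia. }
  rewrite B1, B2. f_equal. rewrite H in D. simpl in D. lra.
Qed.

Definition root_index (m : nat) (z : C) : nat := Z.to_nat (Int_part (INR m * frac (arg z))).

Lemma root_index_spec (m : nat) (z : C) : (0 < m)%nat -> Cpow z m = 1 ->
  (root_index m z < m)%nat /\ INR (root_index m z) / INR m = frac (arg z).
Proof.
  intros Hm H. assert (Hm' : 0 < INR m) by (apply lt_0_INR; lia).
  destruct (arg_spec z (Cmod_root_of_unity z m Hm H)) as [_ Ez].
  rewrite Ez, expi2pi_pow in H. unfold expi2pi in H. injection H as Hcos _.
  destruct (cos_eq_1_inv _ Hcos) as [k Hk].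
  assert (Hmk : INR m * arg z = IZR k) by (pose proof PI_RGT_0; nra).
  (* so m {arg z} = k - m [arg z] is an integer, and it lies in [0, m) *)
  set (w := (k - Z.of_nat m * Int_part (arg z))%Z).
  assert (Ew : INR m * frac (arg z) = IZR w).
  { unfold w, frac, frac_part. rewrite minus_IZR, mult_IZR, <- INR_IZR_INZ. nra. }
  destruct (base_fp (arg z)) as [F0 F1]. fold (frac (arg z)) in F0, F1.
  assert (0 <= w)%Z by (apply le_IZR; nra).
  assert (w < Z.of_nat m)%Z by (apply lt_IZR; rewrite <- INR_IZR_INZ; nra).
  unfold root_index. rewrite Ew.
  replace (Int_part (IZR w)) with w by (apply Int_part_spec; lra).
  split; [lia|].
  rewrite INR_IZR_INZ, Z2Nat.id, <- Ew by lia. field. lra.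
Qed.

Lemma roots_of_unity_count_in_arc (m : nat) (L : list C) (a b : R) :
  (0 < m)%nat -> NoDup L -> length L = m -> (forall z, In z L -> Cpow z m = 1) ->
  length (filter (fun z => in_open_interval a b (frac (arg z))) L)
  = length (filter (fun j => in_open_interval a b (INR j / INR m)) (seq 0 m)).
Proof.
  intros Hm HL Hlen Hroot.
  assert (Hperm : Permutation (map (root_index m) L) (seq 0 m)).
  { apply NoDup_Permutation_bis.
    - apply NoDup_map_NoDup_ForallPairs; auto.
      intros x y Hx Hy E. apply frac_arg_inj;
        [apply (Cmod_root_of_unity _ m) .. |]; auto.
      destruct (root_index_spec m x), (root_index_spec m y); auto. congruence.
    - rewrite length_map, length_seq. lia.
    - intros j Hj. apply in_map_iff in Hj as [z [<- Hz]]. apply in_seq.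
      destruct (root_index_spec m z); auto. lia. }
  rewrite <- (Permutation_filter_length _ _ _ Hperm), filter_map_swap, length_map.
  f_equal. apply filter_ext_in. intros z Hz.
  destruct (root_index_spec m z); auto. congruence.
Qed.

Fixpoint Cprod (l : list C) : C :=
  match l with nil => 1 | x :: l => Cmult x (Cprod l) end.

Lemma Cprod_perm (l l' : list C) : Permutation l l' -> Cprod l = Cprod l'.
Proof. induction 1; simpl; try congruence. ring. Qed.

Lemma Cprod_map_mult (z : C) (l : list C) :
  Cprod (map (Cmult z) l) = Cmult (Cpow z (length l)) (Cprod l).
Proof. induction l as [|x l IH]; simpl; [ring | rewrite IH; ring]. Qed.

Lemma Cprod_neq_0 (l : list C) : (forall x, In x l -> x <> 0) -> Cprod l <> 0.
Proof.
  induction l as [|x l IH]; simpl; intros H.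
  - intro E. injection E. lra.
  - apply Cmult_neq_0; auto.
Qed.

(* Multiplication by z permutes L; comparing the products of both sides gives z^|L| = 1. *)
Lemma Cpow_length_mult_closed (L : list C) : NoDup L ->
  (forall x, In x L -> x <> 0) -> (forall x y, In x L -> In y L -> In (Cmult x y) L) ->
  forall z, In z L -> Cpow z (length L) = 1.
Proof.
  intros HL Hnz Hmul z Hz.
  assert (Hperm : Permutation (map (Cmult z) L) L).
  { apply NoDup_Permutation_bis.
    - apply FinFun.Injective_map_NoDup; auto.
      intros x y E. replace x with (Cmult z x / z)%C by (field; auto).
      rewrite E. field. auto.
    - rewrite length_map. lia.
    - intros y Hy. apply in_map_iff in Hy as [x [<- Hx]]. auto. }
  apply Cprod_perm in Hperm. rewrite Cprod_map_mult in Hperm.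
  assert (Hp := Cprod_neq_0 L Hnz).
  replace (Cpow z (length L)) with (Cmult (Cpow z (length L)) (Cprod L) / Cprod L)%C
    by (field; auto).
  rewrite Hperm. field. auto.
Qed.

Definition units_mod (q : Z) : list Z := map Z.of_nat (seq 1 (Z.to_nat q - 1)).

Lemma In_units_mod (q n : Z) : (1 <= q)%Z -> In n (units_mod q) <-> (1 <= n <= q - 1)%Z.
Proof.
  intros Hq. unfold units_mod. rewrite in_map_iff. split.
  - intros [k [<- Hk]]. apply in_seq in Hk. lia.
  - intros Hn. exists (Z.to_nat n). split; [lia|]. apply in_seq. lia.
Qed.

Lemma units_mod_NoDup (q : Z) : NoDup (units_mod q).
Proof. apply FinFun.Injective_map_NoDup; [intros x y; lia | apply seq_NoDup]. Qed.

Lemma length_units_mod (q : Z) : length (units_mod q) = (Z.to_nat q - 1)%nat.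
Proof. unfold units_mod. rewrite length_map, length_seq. reflexivity. Qed.

Section PrimeModulus.

Variable q : Z.
Hypothesis q_prime : prime q.

Let q_ge_2 : (2 <= q)%Z := prime_ge_2 q q_prime.

Lemma units_mod_coprime (n : Z) : In n (units_mod q) -> Z.gcd n q = 1%Z.
Proof.
  intros Hn. apply In_units_mod in Hn; [|lia].
  apply Zgcd_1_rel_prime, rel_prime_le_prime; auto; lia.
Qed.

Lemma units_mod_mult_inj (c x y : Z) :
  In c (units_mod q) -> In x (units_mod q) -> In y (units_mod q) ->
  ((c * x) mod q = (c * y) mod q)%Z -> x = y.
Proof.
  intros Hc Hx Hy E.
  apply In_units_mod in Hc, Hx, Hy; try lia.
  assert (D : (q | c * (x - y))%Z).
  { apply Z.mod_divide; [lia|].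
    rewrite Z.mul_sub_distr_l, Zminus_mod, E, Z.sub_diag. reflexivity. }
  apply prime_mult in D as [D | D]; auto.
  - apply Z.divide_pos_le in D; lia.
  - destruct (Z.eq_dec x y) as [|Hne]; auto. exfalso.
    destruct (Z_le_gt_dec x y).
    + apply Z.divide_opp_r, Z.divide_pos_le in D; lia.
    + apply Z.divide_pos_le in D; lia.
Qed.

Variable chi : Z -> C.
Hypothesis chi_char : is_dirichlet_char q chi.

Lemma char_periodic (k n : Z) : chi (n + k * q)%Z = chi n.
Proof.
  destruct chi_char as [_ [Hper _]].
  assert (Hnat : forall (j : nat) n, chi (n + Z.of_nat j * q)%Z = chi n).
  { induction j as [|j IH]; intros m.
    - f_equal. lia.
    - replace (m + Z.of_nat (S j) * q)%Z with ((m + Z.of_nat j * q) + q)%Z by lia.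
      rewrite Hper. apply IH. }
  destruct (Z_le_gt_dec 0 k).
  - replace k with (Z.of_nat (Z.to_nat k)) by lia. apply Hnat.
  - rewrite <- (Hnat (Z.to_nat (- k)) (n + k * q)%Z). f_equal. lia.
Qed.

Lemma char_mod (n : Z) : chi n = chi (n mod q)%Z.
Proof.
  rewrite (Z_div_mod_eq_full n q) at 1.
  rewrite <- (char_periodic (n / q) (n mod q)). f_equal. lia.
Qed.

Lemma char_units_neq_0 (n : Z) : In n (units_mod q) -> chi n <> 0.
Proof.
  intros Hn E. destruct chi_char as [_ [_ [_ Hz]]].
  apply Hz in E. apply E, units_mod_coprime, Hn.
Qed.

Lemma char_neq_0_mod_units (n : Z) : chi n <> 0 -> In (n mod q)%Z (units_mod q).
Proof.
  intros Hn. apply In_units_mod; [lia|].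
  pose proof (Z.mod_pos_bound n q ltac:(lia)).
  destruct (Z.eq_dec (n mod q) 0) as [E | E]; [|lia].
  exfalso. apply Hn. rewrite char_mod, E.
  destruct chi_char as [_ [_ [_ Hz]]]. apply Hz. rewrite Z.gcd_0_l. lia.
Qed.

Lemma units_mod_mult (n1 n2 : Z) : In n1 (units_mod q) -> In n2 (units_mod q) ->
  In ((n1 * n2) mod q)%Z (units_mod q) /\ chi ((n1 * n2) mod q)%Z = Cmult (chi n1) (chi n2).
Proof.
  intros H1 H2. destruct chi_char as [Hmul _].
  rewrite <- char_mod, Hmul. split; [|reflexivity].
  apply char_neq_0_mod_units. rewrite Hmul.
  apply Cmult_neq_0; apply char_units_neq_0; auto.
Qed.

Lemma char_inverse (n : Z) : In n (units_mod q) ->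
  exists c, In c (units_mod q) /\ Cmult (chi c) (chi n) = 1.
Proof.
  intros Hn. pose proof (units_mod_coprime n Hn) as G.
  apply Zgcd_1_rel_prime, Zis_gcd_bezout in G as [u v Huv].
  destruct chi_char as [Hmul [_ [H1 _]]].
  assert (Hc : Cmult (chi (u mod q)%Z) (chi n) = 1).
  { rewrite <- char_mod, <- Hmul.
    replace (u * n)%Z with (1 + (- v) * q)%Z by lia. rewrite char_periodic. exact H1. }
  exists (u mod q)%Z. split; [|exact Hc].
  apply char_neq_0_mod_units. rewrite char_mod.
  intro E. rewrite E, Cmult_0_l in Hc. injection Hc. lra.
Qed.

Definition char_values : list C := nodup Ceq_dec (map chi (units_mod q)).

Lemma In_char_values (z : C) : In z char_values <-> exists n, In n (units_mod q) /\ chi n = z.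
Proof. unfold char_values. rewrite nodup_In, in_map_iff. firstorder. Qed.

Lemma char_values_NoDup : NoDup char_values.
Proof. apply NoDup_nodup. Qed.

Lemma char_values_pow_length (z : C) : In z char_values -> Cpow z (length char_values) = 1.
Proof.
  apply Cpow_length_mult_closed; [apply char_values_NoDup | |].
  - intros x Hx. apply In_char_values in Hx as [n [Hn <-]]. apply char_units_neq_0, Hn.
  - intros x y Hx Hy.
    apply In_char_values in Hx as [n1 [Hn1 <-]], Hy as [n2 [Hn2 <-]].
    apply In_char_values. exists ((n1 * n2) mod q)%Z. apply units_mod_mult; auto.
Qed.

Lemma char_coprime_pow_length (n : Z) : Z.gcd n q = 1%Z ->
  Cpow (chi n) (length char_values) = 1.
Proof.
  intros Hn. rewrite char_mod. apply char_values_pow_length, In_char_values.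
  exists (n mod q)%Z. split; auto.
  apply char_neq_0_mod_units. destruct chi_char as [_ [_ [_ Hz]]]. rewrite Hz. auto.
Qed.

Definition char_fiber (z : C) : list Z := fiber Ceq_dec chi (units_mod q) z.

Lemma char_fiber_length_le (c : Z) (z : C) : In c (units_mod q) ->
  (length (char_fiber z) <= length (char_fiber (Cmult (chi c) z)))%nat.
Proof.
  intros Hc. rewrite <- (length_map (fun n => (c * n) mod q)%Z).
  apply NoDup_incl_length.
  - apply NoDup_map_NoDup_ForallPairs; [|apply NoDup_filter, units_mod_NoDup].
    intros x y Hx Hy. apply filter_In in Hx as [Hx _], Hy as [Hy _].
    apply units_mod_mult_inj; auto.
  - intros y Hy. apply in_map_iff in Hy as [x [<- Hx]].
    apply filter_In in Hx as [Hx Ex]. apply filter_In.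
    destruct (units_mod_mult c x Hc Hx) as [Hcx ->]. split; auto.
    destruct (Ceq_dec (chi x) z) as [<- |]; [|discriminate].
    destruct Ceq_dec; auto.
Qed.

Lemma char_fiber_length (z : C) : In z char_values ->
  length (char_fiber z) = length (char_fiber 1).
Proof.
  intros Hz. apply In_char_values in Hz as [n [Hn <-]].
  destruct (char_inverse n Hn) as [c [Hc Hcn]].
  apply Nat.le_antisymm.
  - rewrite <- Hcn. apply char_fiber_length_le, Hc.
  - rewrite <- (Cmult_1_r (chi n)). apply char_fiber_length_le, Hn.
Qed.

Lemma length_filter_char_values (P : C -> bool) :
  length (filter (fun n => P (chi n)) (units_mod q))
  = (length (char_fiber (RtoC 1)) * length (filter P char_values))%nat.
Proof.
  apply (length_filter_uniform_fibers Ceq_dec); [apply char_values_NoDup | |].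
  - intros n Hn. apply In_char_values. eauto.
  - intros z Hz. apply char_fiber_length, Hz.
Qed.

Lemma units_mod_length_factor :
  (Z.to_nat q - 1 = length (char_fiber (RtoC 1)) * length char_values)%nat.
Proof.
  pose proof (length_filter_char_values (fun _ => true)) as E. cbv beta in E.
  rewrite !List.filter_true, length_units_mod in E. exact E.
Qed.

End PrimeModulus.

Lemma char_order_le (q : Z) (chi : Z -> C) (d e : nat) : char_order q chi d -> (0 < e)%nat ->
  (forall n, Z.gcd n q = 1%Z -> Cpow (chi n) e = 1) -> (d <= e)%nat.
Proof.
  intros [_ [_ Hmin]] He Hpow. destruct (Nat.le_gt_cases d e) as [|Hlt]; auto.
  exfalso. apply (Hmin e); auto.
Qed.

Lemma scaled_count_error (k m d : nat) (N q a b : R) :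
  (0 < d)%nat -> (d <= m)%nat -> (1 <= k)%nat -> q - 1 = INR k * INR m ->
  Rabs (N - INR m * (b - a)) <= 1 -> 0 <= b - a <= 1 ->
  Rabs (INR k * N - q * (b - a)) <= 2 * q / INR d.
Proof.
  intros Hd Hdm Hk Hq HN Hba.
  apply le_INR in Hdm, Hk. apply lt_INR in Hd. simpl in Hk, Hd.
  replace (INR k * N - q * (b - a)) with (INR k * (N - INR m * (b - a)) - (b - a))
    by (replace q with (INR k * INR m + 1) by lra; ring).
  eapply Rle_trans; [apply Rabs_triang|].
  rewrite Rabs_Ropp, Rabs_mult, (Rabs_right (INR k)), (Rabs_right (b - a)) by lra.
  apply Rmult_le_reg_r with (INR d); [lra|].
  unfold Rdiv. rewrite Rmult_assoc, Rinv_l by lra.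
  assert (INR k * Rabs (N - INR m * (b - a)) + (b - a) <= 2 * INR k) by nra.
  assert (INR k * INR d <= INR k * INR m) by nra.
  nra.
Qed.

Lemma bracket_lower_bound (d : nat) (K : R) : (0 < d)%nat -> 1 <= K ->
  1 / (2 * INR d) <= 1 / K + ln (1 + IZR (Int_part (K / INR d))) / INR d.
Proof.
  intros Hd HK. apply lt_INR in Hd. simpl in Hd.
  destruct (base_Int_part (K / INR d)) as [I1 I2].
  set (p := Int_part (K / INR d)) in *.
  assert (HKd : 0 < K / INR d) by (apply Rdiv_lt_0_compat; lra).
  assert (Hp : 0 <= IZR p) by (apply IZR_le, Z.lt_pred_le, lt_IZR; simpl; lra).
  assert (Hln : 0 <= ln (1 + IZR p)).
  { destruct Hp as [Hp | <-].
    - rewrite <- ln_1. left. apply ln_increasing; lra.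
    - rewrite Rplus_0_r, ln_1. lra. }
  assert (0 < 1 / K) by (apply Rdiv_lt_0_compat; lra).
  destruct (Rlt_dec K (INR d)).
  - assert (1 / (2 * INR d) <= 1 / K)
      by (unfold Rdiv; rewrite !Rmult_1_l; apply Rinv_le_contravar; lra).
    assert (0 <= ln (1 + IZR p) / INR d) by (apply Rdiv_le_0_compat; lra).
    lra.
  - assert (1 <= K / INR d)
      by (apply Rmult_le_reg_r with (INR d); [lra | field_simplify; lra]).
    assert (1 <= IZR p) by (apply IZR_le, Z.lt_pred_le, lt_IZR; simpl; lra).
    assert (/ 2 < ln (1 + IZR p)).
    { pose proof ln_lt_2. destruct (Req_dec (1 + IZR p) 2) as [-> | Hp2]; [lra|].
      pose proof (ln_increasing 2 (1 + IZR p) ltac:(lra) ltac:(lra)). lra. }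
    assert (1 / (2 * INR d) <= ln (1 + IZR p) / INR d).
    { replace (1 / (2 * INR d)) with (/ 2 / INR d) by (field; lra).
      apply Rmult_le_compat_r; [left; apply Rinv_0_lt_compat|]; lra. }
    lra.
Qed.

Theorem lemma2p4 :
  exists C0 : R, 0 < C0 /\
  forall (a b : R) (q : Z) (chi : Z -> C) (d : nat) (K : R),
    0 <= a -> a < b -> b <= 1 ->
    prime q ->
    is_primitive_char q chi ->
    char_order q chi d ->
    1 <= K ->
    Rabs (INR (count_arg_in q chi a b) - IZR q * (b - a))
      <= C0 * IZR q *
         (1 / K + ln (1 + IZR (Int_part (K / INR d))) / INR d).
Proof.
  exists 4. split; [lra|].
  intros a b q chi d K Ha Hab Hb Hq [Hchi _] Hord HK.
  pose proof (prime_ge_2 q Hq) as Hq2.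
  pose proof (units_mod_length_factor q Hq chi Hchi) as Hqkm.
  set (L := char_values q chi) in *. set (m := length L) in *.
  set (k := length (char_fiber q chi 1)) in *.
  assert (Hm : (0 < m)%nat) by nia.
  assert (Hk : (1 <= k)%nat) by nia.
  assert (Hcount : count_arg_in q chi a b
                   = (k * length (filter (fun z => in_open_interval a b (frac (arg z))) L))%nat)
    by exact (length_filter_char_values q Hq chi Hchi _).
  rewrite (roots_of_unity_count_in_arc m L a b Hm (char_values_NoDup q chi) eq_refl
             (char_values_pow_length q Hq chi Hchi)) in Hcount.
  assert (Hdm : (d <= m)%nat)
    by exact (char_order_le q chi d m Hord Hm (char_coprime_pow_length q Hq chi Hchi)).
  assert (Hqr : IZR q - 1 = INR k * INR m).
  { rewrite <- mult_INR, <- Hqkm, minus_INR, INR_IZR_INZ, Z2Nat.id by lia. reflexivity. }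
  destruct Hord as [Hd _].
  rewrite Hcount, mult_INR.
  eapply Rle_trans.
  { apply (scaled_count_error k m d); auto; [apply count_grid_points; auto | lra]. }
  pose proof (bracket_lower_bound d K Hd HK).
  assert (0 < INR d) by (apply lt_0_INR, Hd).
  replace (2 * IZR q / INR d) with (4 * IZR q * (1 / (2 * INR d))) by (field; lra).
  apply Rmult_le_compat_l; [pose proof (IZR_lt 0 q ltac:(lia)); lra | assumption].
Qed.
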